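(* Let $(X,d)$ be a metric space and let $\tilde x=(x_n)$, $\tilde y=(y_n)$ be statistically equivalent sequences of points of $X$. Let $K\subseteq\mathbb N$ be an infinite set with $\liminf_{n\to\infty}\frac{|K(n)|}{n}>0$, where $K(n)=\{k\in K: k\le n\}$, and let $\tilde x'=(x_{n(k)})$ and $\tilde y'=(y_{n(k)})$ be the subsequences of $\tilde x$ and $\tilde y$ with $\{n(k):k\in\mathbb N\}=K$ ($(n(k))$ strictly increasing). Then $\tilde x'$ and $\tilde y'$ are statistically equivalent.
   Context: A set $M\subseteq\mathbb N$ is statistical dense if $\lim_{n\to\infty}|\{m\in M:m\le n\}|/n=1$. Sequences $(u_k),(v_k)$ are statistically equivalent if there is a statistical dense $M\subseteq\mathbb N$ with $u_k=v_k$ for all $k\in M$; subsequences $(x_{n(k)})_k$ are regarded as sequences indexed by $k$. *)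

From Stdlib Require Import Reals List.
From Coquelicot Require Import Coquelicot.
Open Scope R_scope.

(* Subsets of N are represented by their (boolean) characteristic functions.
   N is identified with nat (0-based). *)

Definition count_upto (M : nat -> bool) (n : nat) : nat :=
  length (filter M (seq 0 n)).

Definition density_seq (M : nat -> bool) (n : nat) : R :=
  INR (count_upto M n) / INR n.

Definition stat_dense (M : nat -> bool) : Prop :=
  is_lim_seq (density_seq M) 1.

Definition stat_equiv {X : Type} (u v : nat -> X) : Prop :=
  exists M : nat -> bool, stat_dense M /\ (forall k, M k = true -> u k = v k).

Definition is_metric {X : Type} (d : X -> X -> R) : Prop :=
  (forall x y, d x y = 0 <-> x = y) /\
  (forall x y, d x y = d y x) /\
  (forall x y z, d x z <= d x y + d y z).

(* Transport the statistical density of [M] along the subsequence.  At time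
   [n] the subsequence has used exactly the first [n] elements of [K], all
   below [nk n]; hence the indices [k < n] with [nk k] outside [M] are at most
   the exceptions of [M] below [nk n], and dividing by [n >= delta * nk n]
   (positive lower density of [K]) only costs the factor [1 / delta]. *)
From Stdlib Require Import Reals List Lia Lra Arith Bool.
From Coquelicot Require Import Coquelicot.
Open Scope R_scope.

Definition compl (M : nat -> bool) (m : nat) : bool := negb (M m).

Lemma count_upto_S (M : nat -> bool) n :
  count_upto M (S n) = (count_upto M n + (if M n then 1 else 0))%nat.
Proof.
  unfold count_upto. rewrite seq_S, filter_app, length_app. simpl.
  destruct (M n); simpl; lia.
Qed.

Lemma count_upto_ext (P Q : nat -> bool) n :
  (forall m, P m = Q m) -> count_upto P n = count_upto Q n.
Proof.
  intro HPQ; induction n as [|n IH]; [reflexivity|].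
  now rewrite !count_upto_S, IH, HPQ.
Qed.

Lemma count_upto_le (P Q : nat -> bool) n :
  (forall m, P m = true -> Q m = true) -> (count_upto P n <= count_upto Q n)%nat.
Proof.
  intro HPQ; induction n as [|n IH]; [apply Nat.le_refl|].
  rewrite !count_upto_S.
  destruct (P n) eqn:HP; [rewrite (HPQ _ HP); lia|].
  destruct (Q n); lia.
Qed.

Lemma count_upto_compl (M : nat -> bool) n :
  (count_upto M n + count_upto (compl M) n = n)%nat.
Proof.
  induction n as [|n IH]; [reflexivity|].
  rewrite !count_upto_S; unfold compl at 2; destruct (M n); simpl; lia.
Qed.

Lemma count_upto_eq0 (Q : nat -> bool) b :
  (forall m, (m < b)%nat -> Q m = false) -> count_upto Q b = 0%nat.
Proof.
  induction b as [|b IH]; intro HQ; [reflexivity|].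
  rewrite count_upto_S, HQ, IH; [lia| |lia].
  intros m Hm; apply HQ; lia.
Qed.

Lemma count_upto_gap (Q : nat -> bool) a b : (a < b)%nat ->
  (forall m, (a < m < b)%nat -> Q m = false) ->
  count_upto Q b = (count_upto Q a + (if Q a then 1 else 0))%nat.
Proof.
  intros Hab HQ. induction b as [|b IH]; [lia|].
  destruct (Nat.eq_dec a b) as [->|Hne]; [apply count_upto_S|].
  rewrite count_upto_S, IH, (HQ b); [lia|lia|lia|].
  intros m Hm; apply HQ; lia.
Qed.

Lemma density_seq_compl (M : nat -> bool) n : (0 < n)%nat ->
  density_seq (compl M) n = 1 - density_seq M n.
Proof.
  intro Hn. unfold density_seq.
  assert (Hsum : INR (count_upto M n) + INR (count_upto (compl M) n) = INR n)
    by (rewrite <- plus_INR; f_equal; apply count_upto_compl).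
  assert (0 < INR n) by (apply lt_0_INR; exact Hn).
  field_simplify_eq; lra.
Qed.

Lemma stat_dense_compl (M : nat -> bool) :
  stat_dense M <-> is_lim_seq (density_seq (compl M)) 0.
Proof.
  assert (Hev : forall P Q : nat -> bool,
    eventually (fun n => 1 - density_seq P n = density_seq Q n) ->
    is_lim_seq (density_seq P) 1 -> is_lim_seq (density_seq Q) 0).
  { intros P Q HPQ HP. replace 0 with (1 - 1) by ring.
    apply (is_lim_seq_ext_loc _ _ _ HPQ), is_lim_seq_minus';
      [apply is_lim_seq_const | exact HP]. }
  unfold stat_dense; split; intro H.
  - apply (Hev M); [|exact H].
    exists 1%nat; intros n Hn; symmetry; apply density_seq_compl; lia.
  - apply is_lim_seq_spec in H; apply is_lim_seq_spec.
    intro eps; destruct (H eps) as [N HN]; exists (S N); intros n Hn.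
    specialize (HN n ltac:(lia)).
    rewrite density_seq_compl in HN by lia.
    now replace (density_seq M n - 1) with (- (1 - density_seq M n - 0))
      by ring; rewrite Rabs_Ropp.
Qed.

Lemma LimInf_seq_pos_lower_bound (u : nat -> R) :
  Rbar_lt 0 (LimInf_seq u) ->
  exists delta, 0 < delta /\ eventually (fun n => delta <= u n).
Proof.
  destruct (ex_LimInf_seq u) as [l Hl].
  rewrite (is_LimInf_seq_unique _ _ Hl).
  destruct l as [l| |]; simpl in Hl |- *; intro Hpos; [| |contradiction].
  - assert (Hhalf : 0 < l / 2) by lra.
    destruct (Hl (mkposreal _ Hhalf)) as [_ [N HN]].
    exists (l / 2); split; [lra|].
    exists N; intros n Hn; specialize (HN n Hn); simpl in HN; lra.
  - destruct (Hl 1) as [N HN].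
    exists 1; split; [lra|].
    exists N; intros n Hn; specialize (HN n Hn); lra.
Qed.

Section Subsequence.

Variable K : nat -> bool.
Variable nk : nat -> nat.
Hypothesis nk_incr : forall k, (nk k < nk (S k))%nat.
Hypothesis nk_range : forall m, K m = true <-> exists k, nk k = m.

Lemma nk_le (k n : nat) : (k <= n)%nat -> (nk k <= nk n)%nat.
Proof.
  induction 1 as [|n _ IH]; [lia|]. specialize (nk_incr n); lia.
Qed.

Lemma nk_ge_id (n : nat) : (n <= nk n)%nat.
Proof. induction n as [|n IH]; [lia|]. specialize (nk_incr n); lia. Qed.

Lemma eventually_nk : filterlim nk eventually eventually.
Proof.
  intros P [N HN]. exists N; intros n Hn. apply HN.
  pose proof (nk_ge_id n); lia.
Qed.

Lemma count_upto_subseq (P : nat -> bool) n :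
  count_upto (fun k => P (nk k)) n = count_upto (fun m => K m && P m) (nk n).
Proof.
  induction n as [|n IH].
  - symmetry; apply count_upto_eq0; intros m Hm.
    destruct (K m) eqn:HK; [|reflexivity].
    apply nk_range in HK as [k <-].
    pose proof (nk_le 0 k ltac:(lia)); lia.
  - rewrite count_upto_S, IH, (count_upto_gap _ (nk n) (nk (S n)) (nk_incr n)).
    + replace (K (nk n)) with true by (symmetry; apply nk_range; eauto).
      reflexivity.
    + intros m Hm. destruct (K m) eqn:HK; [|reflexivity].
      apply nk_range in HK as [k <-].
      destruct (le_lt_dec k n) as [Hk|Hk].
      * pose proof (nk_le _ _ Hk); lia.
      * pose proof (nk_le (S n) k Hk); lia.
Qed.

Lemma count_upto_K_nk n : count_upto K (nk n) = n.
Proof.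
  transitivity (count_upto (fun _ => true) n).
  - rewrite (count_upto_subseq (fun _ => true)).
    apply count_upto_ext; intro m; symmetry; apply andb_true_r.
  - induction n as [|n IH]; [reflexivity|]. rewrite count_upto_S, IH; lia.
Qed.

Lemma count_upto_compl_subseq (M : nat -> bool) n :
  (count_upto (compl (fun k => M (nk k))) n <= count_upto (compl M) (nk n))%nat.
Proof.
  rewrite (count_upto_subseq (compl M)).
  apply count_upto_le; intros m Hm; apply andb_true_iff in Hm; tauto.
Qed.

Lemma density_compl_subseq_le (M : nat -> bool) (delta : R) n :
  0 < delta -> (0 < n)%nat -> delta <= density_seq K (nk n) ->
  density_seq (compl (fun k => M (nk k))) n <=
  / delta * density_seq (compl M) (nk n).
Proof.
  intros Hdelta Hn HK. unfold density_seq in *.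
  rewrite count_upto_K_nk in HK.
  pose proof (le_INR _ _ (count_upto_compl_subseq M n)) as Hcount.
  pose proof (pos_INR (count_upto (compl M) (nk n))).
  assert (Hnpos : 0 < INR n) by (apply lt_0_INR; exact Hn).
  assert (HNpos : 0 < INR (nk n))
    by (apply lt_0_INR; pose proof (nk_ge_id n); lia).
  assert (HnN : delta * INR (nk n) <= INR n).
  { apply Rmult_le_compat_r with (r := INR (nk n)) in HK; [|lra].
    now replace (INR n / INR (nk n) * INR (nk n)) with (INR n) in HK
      by (field; lra). }
  apply Rle_trans with (INR (count_upto (compl M) (nk n)) / INR n).
  - apply Rmult_le_compat_r; [apply Rlt_le, Rinv_0_lt_compat|]; lra.
  - replace (/ delta * (INR (count_upto (compl M) (nk n)) / INR (nk n)))
      with (INR (count_upto (compl M) (nk n)) / (delta * INR (nk n)))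
      by (field; lra).
    apply Rmult_le_compat_l; [lra|].
    apply Rinv_le_contravar; [nra|exact HnN].
Qed.

End Subsequence.

Theorem lemma4 (X : Type) (d : X -> X -> R) (Hd : is_metric d)
  (x y : nat -> X) (Hxy : stat_equiv x y)
  (K : nat -> bool)
  (HKinf : forall N : nat, exists k : nat, (N <= k)%nat /\ K k = true)
  (HKdens : Rbar_lt 0 (LimInf_seq (density_seq K)))
  (nk : nat -> nat)
  (Hinc : forall k : nat, (nk k < nk (S k))%nat)
  (Hrange : forall m : nat, K m = true <-> exists k : nat, nk k = m) :
  stat_equiv (fun k => x (nk k)) (fun k => y (nk k)).
Proof.
  destruct Hxy as [M [HM HMxy]].
  exists (fun k => M (nk k)); split; [|intros k Hk; exact (HMxy _ Hk)].
  destruct (LimInf_seq_pos_lower_bound _ HKdens) as [delta [Hdelta [N HN]]].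
  apply stat_dense_compl in HM; apply stat_dense_compl.
  apply is_lim_seq_le_le_loc
    with (u := fun _ => 0)
         (w := fun n => / delta * density_seq (compl M) (nk n)).
  - exists (S N); intros n Hn; split.
    + unfold density_seq; apply Rdiv_le_0_compat; [apply pos_INR|].
      apply lt_0_INR; lia.
    + apply (density_compl_subseq_le K nk Hinc Hrange); [exact Hdelta|lia|].
      apply HN; pose proof (nk_ge_id nk Hinc n); lia.
  - apply is_lim_seq_const.
  - replace (Finite 0) with (Rbar_mult (/ delta) 0) by (simpl; f_equal; ring).
    apply is_lim_seq_scal_l, (is_lim_seq_subseq _ _ nk (eventually_nk nk Hinc)), HM.
Qed.
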